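(* Let $K$ be a field, $f\colon R\to S$ a morphism of Zinbiel algebras, and $\Theta_t=\sum_{i\ge0}\theta_it^i$ a deformation of $f$ with $\theta_i=(m_{R,i};m_{S,i};f_i)$. Then the infinitesimal $\theta_1$ is a $2$-cocycle in $C^2_{\mathrm{Zinb}}(f,f)$, i.e. $d^2_f\theta_1=0$. More generally, if $\theta_i=0$ for $i=1,\dots,l$, then $\theta_{l+1}$ is a $2$-cocycle. Moreover, if $\overline{\Theta}_t$ is a deformation of $f$ equivalent to $\Theta_t$, then $\theta_1-\overline{\theta}_1$ is a $2$-coboundary; that is, the cohomology class of $\theta_1$ in $H^2_{\mathrm{Zinb}}(f,f)$ depends only on the equivalence class of $\Theta_t$.
   Context: A Zinbiel algebra over $K$ is a $K$-vector space $R$ with bilinear product $x\cdot y$ (also written $m_R(x,y)$) satisfying $(x\cdot y)\cdot z=x\cdot(y\cdot z)+x\cdot(z\cdot y)$. A morphism $f\colon R\to S$ is a linear map with $f(x\cdot y)=f(x)\cdot f(y)$. $R$ is a bimodule over itself, $S$ over itself, and $S$ is an $R$-bimodule via $r\cdot s=f(r)\cdot s$, $s\cdot r=s\cdot f(r)$. For a bimodule $A$ over $R$ and $1\le n\le4$, $C^n_{\mathrm{Zinb}}(R,A)=\mathrm{Hom}_K(R^{\otimes n},A)$ with $(d^1\varphi)(x,y)=x\cdot\varphi(y)-\varphi(x\cdot y)+\varphi(x)\cdot y$, $(d^2\varphi)(x,y,z)=x\cdot(\varphi(y,z)+\varphi(z,y))-\varphi(x\cdot y,z)+\varphi(x,y\cdot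 z+z\cdot y)-\varphi(x,y)\cdot z$, $(d^3\varphi)(x,y,z,w)=x\cdot\{\varphi(y,z,w)-\varphi(z,w,y)+\varphi(z,y,w)-\varphi(w,z,y)\}-\varphi(x\cdot y,z,w)+\varphi(x,y\cdot z+z\cdot y,w)-\varphi(x,y,z\cdot w+w\cdot z)+\varphi(x,y,z)\cdot w$. The deformation complex: $C^0_{\mathrm{Zinb}}(R,S)=0$, $d^0=0$, $C^n_{\mathrm{Zinb}}(f,f)=C^n_{\mathrm{Zinb}}(R,R)\times C^n_{\mathrm{Zinb}}(S,S)\times C^{n-1}_{\mathrm{Zinb}}(R,S)$ ($1\le n\le4$), $d^i_f(\xi;\pi;\varphi)=(d^i\xi;d^i\pi;f\xi-\pi f-d^{i-1}\varphi)$ with $(f\xi)(x_1,\dots)=f(\xi(x_1,\dots))$, $(\pi f)(x_1,\dots)=\pi(f(x_1),\dots)$. $H^2_{\mathrm{Zinb}}(f,f)$ is the second cohomology of this complex; elements of $C^1_{\mathrm{Zinb}}(f,f)$ are pairs $(\xi;\pi)$. A deformation of $f$ is a formal power series $\Theta_t=\sum_{i\ge0}\theta_it^i$ ($t$ an indeterminate) with $\theta_0=(m_R;m_S;f)$ and $\theta_i=(m_{R,i};m_{S,i};f_i)\in C^2_{\mathrm{Zinb}}(f,f)$, such that for $*=R,S$ the bilinear map $M_{*,t}=\sum_i m_{*,i}t^i$ satisfies $M_{*,t}(M_{*,t}(x,y),z)=M_{*,t}(x,M_{*,t}(y,z))+M_{*,t}(x,M_{*,t}(z,y))$ on $*[[t]]$,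 and $F_t=\sum_if_it^i$ satisfies $F_t(M_{R,t}(x,y))=M_{S,t}(F_t(x),F_t(y))$. Its infinitesimal is $\theta_1$. A formal isomorphism of $f$ is $\Phi_t=(\Phi_{R,t};\Phi_{S,t})=\sum_{i\ge0}(\phi_{R,i};\phi_{S,i})t^i$ with $(\phi_{R,0};\phi_{S,0})=(\mathrm{Id}_R;\mathrm{Id}_S)$ and $\phi_{R,i}\in\mathrm{Hom}_K(R,R)$, $\phi_{S,i}\in\mathrm{Hom}_K(S,S)$. Two deformations $\Theta_t=(M_{R,t};M_{S,t};F_t)$, $\overline{\Theta}_t=(\overline{M}_{R,t};\overline{M}_{S,t};\overline{F}_t)$ are equivalent if there is a formal isomorphism $\Phi_t$ with $\overline{M}_{R,t}=\Phi_{R,t}M_{R,t}\Phi_{R,t}^{-1}$ (i.e. $\overline{M}_{R,t}(x,y)=\Phi_{R,t}(M_{R,t}(\Phi_{R,t}^{-1}x,\Phi_{R,t}^{-1}y))$), similarly for $S$, and $\overline{F}_t=\Phi_{S,t}F_t\Phi_{R,t}^{-1}$. *)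

From HB Require Import structures.
From mathcomp Require Import all_boot all_order all_algebra.
Set Implicit Arguments. Unset Strict Implicit. Unset Printing Implicit Defensive.
Import GRing.Theory.
Local Open Scope ring_scope.

Section Zinbiel.
Variable K : fieldType.

Definition islin (V W : lmodType K) (g : V -> W) :=
  forall (a : K) (u v : V), g (a *: u + v) = a *: g u + g v.

Definition isbilin (V W : lmodType K) (m : V -> V -> W) :=
  (forall x, islin (m x)) /\ (forall y, islin (fun x => m x y)).

Definition zinbiel (V : lmodType K) (m : V -> V -> V) :=
  isbilin m /\ forall x y z, m (m x y) z = m x (m y z) + m x (m z y).

Definition zinb_morph (R S : lmodType K) (mR : R -> R -> R) (mS : S -> S -> S)
  (f : R -> S) := islin f /\ forall x y, f (mR x y) = mS (f x) (f y).

(* Cochain differentials for a bimodule A over (R, mR), with left action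
   l : R -> A -> A and right action r : A -> R -> A. *)
Definition d1 (R A : lmodType K) (mR : R -> R -> R) (l : R -> A -> A)
  (r : A -> R -> A) (phi : R -> A) : R -> R -> A :=
  fun x y => l x (phi y) - phi (mR x y) + r (phi x) y.

Definition d2 (R A : lmodType K) (mR : R -> R -> R) (l : R -> A -> A)
  (r : A -> R -> A) (phi : R -> R -> A) : R -> R -> R -> A :=
  fun x y z => l x (phi y z + phi z y) - phi (mR x y) z
               + phi x (mR y z + mR z y) - r (phi x y) z.

(* d^2_f on C^2(f,f) = C^2(R,R) x C^2(S,S) x C^1(R,S) *)
Definition d2f (R S : lmodType K) (mR : R -> R -> R) (mS : S -> S -> S)
  (f : R -> S) (xi : R -> R -> R) (pi : S -> S -> S) (phi : R -> S) :
  (R -> R -> R -> R) * (S -> S -> S -> S) * (R -> R -> S) :=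
  (d2 mR mR mR xi, d2 mS mS mS pi,
   fun x y => f (xi x y) - pi (f x) (f y)
              - d1 mR (fun x s => mS (f x) s) (fun s x => mS s (f x)) phi x y).

(* d^1_f on C^1(f,f) = C^1(R,R) x C^1(S,S) x C^0(R,S), with C^0(R,S) = 0, d^0 = 0 *)
Definition d1f (R S : lmodType K) (mR : R -> R -> R) (mS : S -> S -> S)
  (f : R -> S) (xi : R -> R) (pi : S -> S) :
  (R -> R -> R) * (S -> S -> S) * (R -> S) :=
  (d1 mR mR mR xi, d1 mS mS mS pi, fun x => f (xi x) - pi (f x)).

Definition cocycle2 (R S : lmodType K) (mR : R -> R -> R) (mS : S -> S -> S)
  (f : R -> S) (xi : R -> R -> R) (pi : S -> S -> S) (phi : R -> S) :=
  d2f mR mS f xi pi phi =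
    (fun _ _ _ => 0, fun _ _ _ => 0, fun _ _ => 0).

Definition coboundary2 (R S : lmodType K) (mR : R -> R -> R) (mS : S -> S -> S)
  (f : R -> S) (xi : R -> R -> R) (pi : S -> S -> S) (phi : R -> S) :=
  exists (a : R -> R) (b : S -> S), islin a /\ islin b /\
    d1f mR mS f a b = (xi, pi, phi).

(* Coefficient of t^n of the Zinbiel identity for M_t = sum_i M i t^i
   (the K[[t]]-bilinear extension to V[[t]]). *)
Definition zinbiel_series (V : lmodType K) (M : nat -> V -> V -> V) :=
  forall (n : nat) (x y z : V),
    \sum_(i < n.+1) M i (M (n - i)%N x y) z =
    \sum_(i < n.+1) (M i x (M (n - i)%N y z) + M i x (M (n - i)%N z y)).

(* Coefficient of t^n of F_t(M_{R,t}(x,y)) = M_{S,t}(F_t x, F_t y). *)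
Definition morph_series (R S : lmodType K) (MR : nat -> R -> R -> R)
  (MS : nat -> S -> S -> S) (F : nat -> R -> S) :=
  forall (n : nat) (x y : R),
    \sum_(i < n.+1) F i (MR (n - i)%N x y) =
    \sum_(i < n.+1) \sum_(j < (n - i).+1) MS i (F j x) (F (n - i - j)%N y).

(* A deformation Theta_t = sum_i (MR i; MS i; F i) t^i of f. *)
Definition deformation (R S : lmodType K) (mR : R -> R -> R) (mS : S -> S -> S)
  (f : R -> S) (MR : nat -> R -> R -> R) (MS : nat -> S -> S -> S)
  (F : nat -> R -> S) :=
  MR 0%N = mR /\ MS 0%N = mS /\ F 0%N = f /\
  (forall i, isbilin (MR i) /\ isbilin (MS i) /\ islin (F i)) /\
  zinbiel_series MR /\ zinbiel_series MS /\ morph_series MR MS F.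

(* Q is the two-sided inverse of the formal series P = sum_i P i t^i
   (composition of formal series of maps). *)
Definition series_inverse (V : lmodType K) (P Q : nat -> V -> V) :=
  forall (n : nat) (x : V),
    \sum_(i < n.+1) P i (Q (n - i)%N x) = (if n is 0%N then x else 0) /\
    \sum_(i < n.+1) Q i (P (n - i)%N x) = (if n is 0%N then x else 0).

(* Coefficient of t^n of P_t(M_t(Q_t x, Q_t y)). *)
Definition series_conj (V : lmodType K) (P : nat -> V -> V)
  (M : nat -> V -> V -> V) (Q : nat -> V -> V) (n : nat) (x y : V) : V :=
  \sum_(i < n.+1) \sum_(j < (n - i).+1) \sum_(k < (n - i - j).+1)
     P i (M j (Q k x) (Q (n - i - j - k)%N y)).

(* Coefficient of t^n of P_t(F_t(Q_t x)). *)
Definition series_conj1 (R S : lmodType K) (P : nat -> S -> S)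
  (F : nat -> R -> S) (Q : nat -> R -> R) (n : nat) (x : R) : S :=
  \sum_(i < n.+1) \sum_(j < (n - i).+1) P i (F j (Q (n - i - j)%N x)).

(* Equivalence of deformations via a formal isomorphism Phi_t = (PR; PS). *)
Definition equiv_deformations (R S : lmodType K)
  (MR : nat -> R -> R -> R) (MS : nat -> S -> S -> S) (F : nat -> R -> S)
  (MR' : nat -> R -> R -> R) (MS' : nat -> S -> S -> S) (F' : nat -> R -> S) :=
  exists (PR : nat -> R -> R) (PS : nat -> S -> S),
    PR 0%N = id /\ PS 0%N = id /\ (forall i, islin (PR i) /\ islin (PS i)) /\
    exists (QR : nat -> R -> R) (QS : nat -> S -> S),
      series_inverse PR QR /\ series_inverse PS QS /\
      (forall n x y, MR' n x y = series_conj PR MR QR n x y) /\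
      (forall n x y, MS' n x y = series_conj PS MS QS n x y) /\
      (forall n x, F' n x = series_conj1 PS F QR n x).

End Zinbiel.

(** The coefficient of t^n of the Zinbiel identity of M_t reads
    m(M_n(x,y),z) + M_n(m(x,y),z) = m(x, M_n(y,z) + M_n(z,y)) + M_n(x, m(y,z) + m(z,y))
    once the coefficients M_1, ..., M_(n-1) vanish, which is exactly d^2 M_n = 0;
    the coefficient of t^n of F_t(M_(R,t)(x,y)) = M_(S,t)(F_t x, F_t y) is likewise
    the third component of d^2_f (M_(R,n); M_(S,n); F_n) = 0.  For equivalent
    deformations, comparing coefficients of t in M'_t = Phi_t M_t Phi_t^-1 and
    F'_t = Phi_S F_t Phi_R^-1 shows that theta_1 - theta'_1 = d^1_f (phi_(R,1); phi_(S,1)). *)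
From HB Require Import structures.
From mathcomp Require Import all_boot all_order all_algebra.
From Stdlib Require Import FunctionalExtensionality.
Import GRing.Theory.
Local Open Scope ring_scope.

Section LinearMaps.
Context {K : fieldType} {V W : lmodType K} {g : V -> W}.
Hypothesis g_lin : islin g.

Lemma islinD u v : g (u + v) = g u + g v.
Proof. by rewrite -{1}(scale1r u) g_lin scale1r. Qed.

Lemma islin0 : g 0 = 0.
Proof. by apply: (addrI (g 0)); rewrite -islinD !addr0. Qed.

Lemma islinN u : g (- u) = - g u.
Proof. by apply/eqP; rewrite -addr_eq0 -islinD addrC subrr islin0. Qed.

End LinearMaps.

Lemma big_ord_ends {V : zmodType} {n : nat} (g : nat -> V) : (0 < n)%N ->
  (forall i, (0 < i < n)%N -> g i = 0) -> \sum_(i < n.+1) g i = g 0%N + g n.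
Proof.
case: n => // n _ g_mid.
rewrite big_ord_recl big_ord_recr /= big1 ?add0r // => i _.
by apply: g_mid; rewrite /bump /= ltnS ltn_ord.
Qed.

Section LeadingCoefficient.
Context {K : fieldType} {n : nat}.
Hypothesis n_gt0 : (0 < n)%N.

Lemma zinbiel_series_leading_cocycle {V : lmodType K} {M : nat -> V -> V -> V} :
  (forall x, islin (M 0%N x)) -> (forall x, islin (M n x)) ->
  (forall i, (0 < i < n)%N -> M i = (fun _ _ => 0)) ->
  zinbiel_series M -> d2 (M 0%N) (M 0%N) (M 0%N) (M n) = (fun _ _ _ => 0).
Proof.
move=> M0_lin Mn_lin M_gap M_zinb.
apply: functional_extensionality => x; apply: functional_extensionality => y.
apply: functional_extensionality => z.
have := M_zinb n x y z.
rewrite (big_ord_ends (fun i => M i (M (n - i)%N x y) z)) => [||i /M_gap ->] //.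
rewrite (big_ord_ends (fun i => M i x (M (n - i)%N y z) + M i x (M (n - i)%N z y)))
  => [||i /M_gap ->] //; last by rewrite addr0.
rewrite subn0 subnn /d2 (islinD (M0_lin x)) (islinD (Mn_lin x)) => coef_n.
by apply/eqP; rewrite subr_eq0 addrAC subr_eq coef_n.
Qed.

Lemma morph_series_leading_cocycle {R S : lmodType K} {MR : nat -> R -> R -> R}
    {MS : nat -> S -> S -> S} {F : nat -> R -> S} :
  (forall v, islin (MS 0%N ^~ v)) ->
  (forall i, (0 < i < n)%N -> MS i = (fun _ _ => 0) /\ F i = (fun _ => 0)) ->
  morph_series MR MS F ->
  (d2f (MR 0%N) (MS 0%N) (F 0%N) (MR n) (MS n) (F n)).2 = (fun _ _ => 0).
Proof.
move=> MS0_lin gap F_morph; apply: functional_extensionality => x.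
apply: functional_extensionality => y.
have := F_morph n x y.
rewrite (big_ord_ends (fun i => F i (MR (n - i)%N x y))) => [||i /gap[_ ->]] //.
rewrite (big_ord_ends (fun i => \sum_(j < (n - i).+1) MS i (F j x) (F (n - i - j)%N y)))
  => [||i /gap[-> _]] //; last by rewrite big1.
rewrite !subn0 subnn big_ord1 /=.
rewrite (big_ord_ends (fun j => MS 0%N (F j x) (F (n - j)%N y)))
  => [||j /gap[_ ->]] //; last exact: islin0 (MS0_lin _).
rewrite !subn0 subnn /d1 => coef_n.
by apply/eqP; rewrite subr_eq0 [X in _ == X]addrAC eq_sym subr_eq addrAC coef_n addrK.
Qed.

End LeadingCoefficient.

Lemma deformation_leading_cocycle (K : fieldType) (R S : lmodType K)
    (mR : R -> R -> R) (mS : S -> S -> S) (f : R -> S)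
    (MR : nat -> R -> R -> R) (MS : nat -> S -> S -> S) (F : nat -> R -> S) (n : nat) :
  deformation mR mS f MR MS F -> (0 < n)%N ->
  (forall i, (0 < i < n)%N ->
     MR i = (fun _ _ => 0) /\ MS i = (fun _ _ => 0) /\ F i = (fun _ => 0)) ->
  cocycle2 mR mS f (MR n) (MS n) (F n).
Proof.
move=> [<- [<- [<- [lin [MR_zinb [MS_zinb F_morph]]]]]] n_gt0 gap.
rewrite /cocycle2 /d2f; congr (_, _, _).
- apply: zinbiel_series_leading_cocycle => // [x|x|i /gap[] //].
  + exact: (lin 0%N).1.1.
  + exact: (lin n).1.1.
- apply: zinbiel_series_leading_cocycle => // [x|x|i /gap[_ []] //].
  + exact: (lin 0%N).2.1.1.
  + exact: (lin n).2.1.1.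
- apply: (morph_series_leading_cocycle n_gt0 _ _ F_morph) => [v|i /gap[_ //]].
  exact: (lin 0%N).2.1.2.
Qed.

Section FirstOrderConjugation.
Context {K : fieldType} {V : lmodType K} {P Q : nat -> V -> V}.
Hypotheses (P0 : P 0%N = id) (PQ_inv : series_inverse P Q).

Lemma series_inverse_coef0 x : Q 0%N x = x.
Proof. by have [+ _] := PQ_inv 0%N x; rewrite big_ord1 P0. Qed.

Lemma series_inverse_coef1 x : Q 1%N x = - P 1%N x.
Proof.
have [+ _] := PQ_inv 1%N x.
rewrite big_ord_recl big_ord1 /= /bump /= subn0 subnn P0 series_inverse_coef0 /=.
by move/eqP; rewrite addr_eq0 => /eqP.
Qed.

Lemma series_conj_coef1 {M : nat -> V -> V -> V} :
  (forall x, islin (M 0%N x)) -> (forall y, islin (M 0%N ^~ y)) ->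
  forall x y, series_conj P M Q 1 x y = M 1%N x y - d1 (M 0%N) (M 0%N) (M 0%N) (P 1%N) x y.
Proof.
move=> M0_linl M0_linr x y.
rewrite /series_conj !big_ord_recl !big_ord0 /= /bump /= ?subn0 ?subnn ?addr0.
rewrite !series_inverse_coef0 !series_inverse_coef1 P0 /=.
rewrite (islinN (M0_linl x)) (islinN (M0_linr y)) /d1 addn0.
by rewrite !opprD opprK addrAC addrC; congr (_ + _); rewrite addrAC.
Qed.

End FirstOrderConjugation.

Lemma series_conj1_coef1 {K : fieldType} {R S : lmodType K}
    {PR QR : nat -> R -> R} {PS : nat -> S -> S} {F : nat -> R -> S} :
  PR 0%N = id -> PS 0%N = id -> series_inverse PR QR -> islin (F 0%N) ->
  forall x, series_conj1 PS F QR 1 x = F 1%N x - (F 0%N (PR 1%N x) - PS 1%N (F 0%N x)).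
Proof.
move=> PR0 PS0 PQR_inv F0_lin x.
rewrite /series_conj1 !big_ord_recl !big_ord0 /= /bump /= ?subn0 ?subnn ?addr0 addn0.
rewrite !(series_inverse_coef0 PR0 PQR_inv) (series_inverse_coef1 PR0 PQR_inv) PS0 /=.
by rewrite (islinN F0_lin) opprB addrA [RHS]addrAC [- _ + _]addrC.
Qed.

Lemma equiv_infinitesimal_coboundary (K : fieldType) (R S : lmodType K)
    (mR : R -> R -> R) (mS : S -> S -> S) (f : R -> S)
    (MR MR' : nat -> R -> R -> R) (MS MS' : nat -> S -> S -> S) (F F' : nat -> R -> S) :
  deformation mR mS f MR MS F -> equiv_deformations MR MS F MR' MS' F' ->
  coboundary2 mR mS f (fun x y => MR 1%N x y - MR' 1%N x y)
                      (fun x y => MS 1%N x y - MS' 1%N x y)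
                      (fun x => F 1%N x - F' 1%N x).
Proof.
move=> [<- [<- [<- [lin _]]]].
move=> [PR [PS [PR0 [PS0 [P_lin [QR [QS [PQR_inv [PQS_inv [MR'E [MS'E F'E]]]]]]]]]]].
exists (PR 1%N), (PS 1%N); split; first exact: (P_lin 1%N).1.
split; first exact: (P_lin 1%N).2.
rewrite /d1f; congr (_, _, _).
- apply: functional_extensionality => x; apply: functional_extensionality => y.
  by rewrite MR'E (series_conj_coef1 PR0 PQR_inv (lin 0%N).1.1 (lin 0%N).1.2) subKr.
- apply: functional_extensionality => x; apply: functional_extensionality => y.
  by rewrite MS'E (series_conj_coef1 PS0 PQS_inv (lin 0%N).2.1.1 (lin 0%N).2.1.2) subKr.
- apply: functional_extensionality => x.
  by rewrite F'E (series_conj1_coef1 PR0 PS0 PQR_inv (lin 0%N).2.2) subKr.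
Qed.

Theorem theorem3p1 (K : fieldType) (R S : lmodType K)
  (mR : R -> R -> R) (mS : S -> S -> S) (f : R -> S)
  (HR : zinbiel mR) (HS : zinbiel mS) (Hf : zinb_morph mR mS f)
  (MR : nat -> R -> R -> R) (MS : nat -> S -> S -> S) (F : nat -> R -> S)
  (Hdef : deformation mR mS f MR MS F) :
  cocycle2 mR mS f (MR 1%N) (MS 1%N) (F 1%N) /\
  (forall l : nat,
     (forall i : nat, (1 <= i <= l)%N ->
        MR i = (fun _ _ => 0) /\ MS i = (fun _ _ => 0) /\ F i = (fun _ => 0)) ->
     cocycle2 mR mS f (MR l.+1) (MS l.+1) (F l.+1)) /\
  (forall (MR' : nat -> R -> R -> R) (MS' : nat -> S -> S -> S)
          (F' : nat -> R -> S),
     deformation mR mS f MR' MS' F' ->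
     equiv_deformations MR MS F MR' MS' F' ->
     coboundary2 mR mS f (fun x y => MR 1%N x y - MR' 1%N x y)
                         (fun x y => MS 1%N x y - MS' 1%N x y)
                         (fun x => F 1%N x - F' 1%N x)).
Proof.
split; first by apply: deformation_leading_cocycle => // -[].
split=> [l vanish|MR' MS' F' _]; first by apply: deformation_leading_cocycle.
exact: equiv_infinitesimal_coboundary.
Qed.
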